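(* Let $(E,\tau)$ be a violator space. Then $(E,\tau)$ is uniquely generated if and only if $\tau$ satisfies the anti-exchange property: for all $X\subseteq E$ and all distinct $p,q\in E$ with $p,q\notin\tau(X)$, if $p\in\tau(X\cup\{q\})$ then $q\notin\tau(X\cup\{p\})$.
   Context: $E$ is a finite set and $\tau:2^E\to 2^E$. $(E,\tau)$ is a violator space if (C1) $X\subseteq\tau(X)$ for all $X\subseteq E$, and (C22) for all $F,G\subseteq E$, $F\subseteq G\subseteq\tau(F)$ implies $\tau(G)=\tau(F)$. (Equivalently, $V(X)=E-\tau(X)$ satisfies $G\cap V(G)=\emptyset$ and, for $F\subseteq G$ with $G\cap V(F)=\emptyset$, $V(G)=V(F)$.) For $X\subseteq E$, a generator of $X$ is any $B\subseteq E$ with $\tau(B)=\tau(X)$; a basis of $X$ is an inclusion-minimal generator of $X$. The space is uniquely generated if every $X\subseteq E$ has exactly one basis. *)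

From mathcomp Require Import all_boot.
Set Implicit Arguments. Unset Strict Implicit. Unset Printing Implicit Defensive.

Definition violator_space (E : finType) (tau : {set E} -> {set E}) : Prop :=
  (forall X : {set E}, X \subset tau X) /\
  (forall F G : {set E}, F \subset G -> G \subset tau F -> tau G = tau F).

Definition generator (E : finType) (tau : {set E} -> {set E}) (X B : {set E}) : Prop :=
  tau B = tau X.

Definition basis (E : finType) (tau : {set E} -> {set E}) (X B : {set E}) : Prop :=
  generator tau X B /\ (forall C : {set E}, C \proper B -> ~ generator tau X C).

Definition uniquely_generated (E : finType) (tau : {set E} -> {set E}) : Prop :=
  forall X : {set E}, exists! B : {set E}, basis tau X B.

Definition anti_exchange (E : finType) (tau : {set E} -> {set E}) : Prop :=
  forall (X : {set E}) (p q : E), p != q -> p \notin tau X -> q \notin tau X ->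
    p \in tau (q |: X) -> q \notin tau (p |: X).

From mathcomp Require Import all_boot.

(* If anti-exchange fails at X, p, q, then X + p and X + q both generate X + p + q; a unique basis of
   it lies in both, hence in X, so X generates X + q and p would lie in tau X.
   Conversely, under anti-exchange every element b of a basis B of X is an extreme point of tau X,
   i.e. b is not in tau (tau X - b): adding the points of tau X - B one at a time to B - b never
   captures b, because the first point q whose addition did would contradict anti-exchange with
   tau (b + current set) = tau X.  Extreme points lie in every generator, so any two bases of X
   contain each other. *)

Section ViolatorSpace.
Variables (E : finType) (tau : {set E} -> {set E}).
Hypothesis vs : violator_space tau.

Let tau_ext (X : {set E}) : X \subset tau X. Proof. exact: (proj1 vs). Qed.

Let tau_sandwich (F G : {set E}) : F \subset G -> G \subset tau F -> tau G = tau F.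
Proof. exact: (proj2 vs). Qed.

Lemma tau_setU1 (X : {set E}) x : x \in tau X -> tau (x |: X) = tau X.
Proof.
move=> xX; apply: tau_sandwich; first exact: subsetU1.
by apply/subsetP=> y /setU1P [->|/(subsetP (tau_ext X))].
Qed.

Lemma generator_sub_tau {X A : {set E}} : generator tau X A -> A \subset tau X.
Proof. by rewrite /generator => <-. Qed.

Lemma exists_basis_sub {X A : {set E}} :
  generator tau X A -> exists2 B : {set E}, B \subset A & basis tau X B.
Proof.
move=> gA; have gA' : (A \subset A) && (tau A == tau X) by rewrite subxx gA eqxx.
case: (@arg_minnP _ A (fun B => (B \subset A) && (tau B == tau X)) (fun B => #|B|) gA')
  => B /andP [sBA /eqP gB] Bmin.
exists B => //; split=> // C ltCB gC.
have := Bmin C; rewrite (subset_trans (proper_sub ltCB) sBA) /=.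
by rewrite gC eqxx leqNgt proper_card // => /(_ isT).
Qed.

Lemma basis_notin_tauD1 {X B : {set E}} b :
  basis tau X B -> b \in B -> b \notin tau (B :\ b).
Proof.
move=> [gB minB] bB; apply/negP=> bBb; apply: (minB (B :\ b)); first exact: properD1.
by rewrite /generator -gB -{2}(setD1K bB) tau_setU1.
Qed.

Definition extreme_points (X : {set E}) : {set E} :=
  [set x in tau X | x \notin tau (tau X :\ x)].

Lemma extreme_points_sub_generator {X A : {set E}} :
  generator tau X A -> extreme_points X \subset A.
Proof.
move=> gA; apply/subsetP=> x; rewrite inE => /andP [xX]; apply: contraNT=> xA.
suff -> : tau (tau X :\ x) = tau A by rewrite gA.
apply: tau_sandwich; last by rewrite gA subD1set.
apply/subsetP=> y yA; rewrite in_setD1 (subsetP (generator_sub_tau gA)) // andbT.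
by apply: contraNneq xA => <-.
Qed.

Section AntiExchange.
Hypothesis ae : anti_exchange tau.

Lemma basis_notin_tau_extension (X B S : {set E}) b :
  basis tau X B -> b \in B -> S \subset tau X :\: B -> b \notin tau ((B :\ b) :|: S).
Proof.
move=> basB bB; have sBX := generator_sub_tau (proj1 basB).
move: {2}#|S| (erefl #|S|) => n; elim: n S => [|n IH] S cardS sS.
  by move/eqP: cardS; rewrite cards_eq0 => /eqP ->; rewrite setU0 (basis_notin_tauD1 b basB).
have /card_gt0P [q qS] : 0 < #|S| by rewrite cardS.
have /setDP [qX qB] := subsetP sS q qS.
set Z := (B :\ b) :|: (S :\ q).
have bZ : b \notin tau Z.
  apply: IH; last exact: subset_trans (subD1set S q) sS.
  by apply/eqP; rewrite -eqSS -cardS (cardsD1 q S) qS.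
have -> : (B :\ b) :|: S = q |: Z by rewrite setUCA setD1K.
apply/negP=> bqZ.
have qZ : q \notin tau Z by apply: contraNN bZ => /tau_setU1 <-.
have bZX : tau (b |: Z) = tau X.
  rewrite -(proj1 basB); apply: tau_sandwich.
    by rewrite setUA setD1K // subsetUl.
  rewrite (proj1 basB) setUA setD1K //; apply/subsetP=> x /setUP [/(subsetP sBX)//|].
  by move/setD1P=> [_ /(subsetP sS)/setDP []].
have bq : b != q by apply: contraNneq qB => <-.
by have := ae Z b q bq bZ qZ bqZ; rewrite bZX qX.
Qed.

Lemma basis_sub_extreme_points {X B : {set E}} :
  basis tau X B -> B \subset extreme_points X.
Proof.
move=> basB; have sBX := generator_sub_tau (proj1 basB).
apply/subsetP=> b bB; rewrite inE (subsetP sBX) //=.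
have -> : tau X :\ b = (B :\ b) :|: (tau X :\: B).
  apply/setP=> x; rewrite !inE; case: (eqVneq x b) => [->|] /=; first by rewrite bB.
  by case xB: (x \in B) => //= _; rewrite (subsetP sBX).
exact: basis_notin_tau_extension basB bB (subxx _).
Qed.

Lemma anti_exchange_uniquely_generated : uniquely_generated tau.
Proof.
move=> X; have [B _ basB] := exists_basis_sub (erefl (tau X)).
exists B; split=> // C basC; apply/eqP; rewrite eqEsubset.
have sub (B1 B2 : {set E}) : basis tau X B1 -> basis tau X B2 -> B1 \subset B2.
  move=> bas1 bas2; apply: subset_trans (basis_sub_extreme_points bas1) _.
  exact: extreme_points_sub_generator (proj1 bas2).
by rewrite !sub.
Qed.

End AntiExchange.

Lemma uniquely_generated_anti_exchange : uniquely_generated tau -> anti_exchange tau.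
Proof.
move=> ug X p q pq pX qX pqX; apply/negP=> qpX.
have tau_pq : tau (p |: (q |: X)) = tau (q |: X) by rewrite tau_setU1.
have tau_qp : tau (p |: (q |: X)) = tau (p |: X) by rewrite setUCA tau_setU1.
have [Bq sBq basq] := exists_basis_sub (esym tau_pq).
have [Bp sBp basp] := exists_basis_sub (esym tau_qp).
have [B0 [_ uniqB]] := ug (p |: (q |: X)).
have eBqp : Bq = Bp by rewrite -(uniqB _ basq) -(uniqB _ basp).
have sBX : Bq \subset X.
  apply/subsetP=> x xB; move: (subsetP sBq x xB) (subsetP sBp x).
  rewrite -eBqp xB => /setU1P [->|//] /(_ isT) /setU1P [qp|//].
  by rewrite qp eqxx in pq.
have gBq : tau Bq = tau (q |: X) by rewrite (proj1 basq).
have tauX : tau X = tau Bq.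
  apply: tau_sandwich sBX _; rewrite gBq.
  exact: subset_trans (subsetU1 q X) (tau_ext _).
by rewrite tauX gBq pqX in pX.
Qed.

End ViolatorSpace.

Theorem mainTheorem9 (E : finType) (tau : {set E} -> {set E}) :
  violator_space tau -> (uniquely_generated tau <-> anti_exchange tau).
Proof.
move=> vs; split.
- exact: uniquely_generated_anti_exchange.
- exact: anti_exchange_uniquely_generated.
Qed.
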